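(* Let $\widetilde\Delta^{m-1}$ be the last matrix produced by the Row Cancellation Algorithm applied to a connection matrix $\Delta\in\mathbb F^{m\times m}$. Then $\widetilde\Delta^{m-1}_{\cdot j}\,\widetilde\Delta^{m-1}_{j\cdot}=0$ (outer product) for every $j$; i.e. if the $j$-th column of $\widetilde\Delta^{m-1}$ is nonzero then its $j$-th row is zero.
   Context: Throughout, $\mathbb F$ is a field and $m\ge1$. $A_{i\cdot}$, $A_{\cdot j}$ are the $i$-th row and $j$-th column of $A$. $U^{pq}$ is the $m\times m$ matrix whose only nonzero entry is a $1$ in position $(p,q)$. Superscripts on matrices are indices, not powers. A connection matrix (over $\mathbb F$) is a matrix $\Delta\in\mathbb F^{m\times m}$ together with a partition $\{1,\dots,m\}=J_0\sqcup\cdots\sqcup J_b$ (the column/row partition; the $J_k$ need not consist of consecutive integers) such that $\Delta$ is upper triangular, $\Delta\Delta=0$, and $\Delta_{ij}=0$ unless $i<j$ and $(i,j)\in\bigcup_{k=1}^bJ_{k-1}\times J_k$. For $1\le r\le m-1$ the $r$-th diagonal is $\{(j-r,j):r<j\le m\}$. Row Cancellation Algorithm (RCA) applied to a connection matrix $\Delta$: set $\widetilde\Delta^0=\widetilde\Delta^1=\Delta$. For $r=1,\dots,m-1$ in turn: (Markup) mark permanently as a primary pivot every position $(j-r,j)$ on the $r$-th diagonal with $\widetilde\Delta^r_{j-r,j}\ne0$ such that no position of column $j$ was marked as a primary pivot at an earlier iteration. (Update, only for $r\le m-2$) If no position was marked at iteration $r$, put $\widetilde T^r=I$; otherwise let $j_1<\cdots<j_t$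 be the columns of the positions marked at iteration $r$, let $\widetilde T^{r,s}=I-\sum_{q=j_s+1}^m\frac{\widetilde\Delta^r_{j_s-r,q}}{\widetilde\Delta^r_{j_s-r,j_s}}U^{j_sq}$ and $\widetilde T^r=\widetilde T^{r,1}\cdots\widetilde T^{r,t}$. Set $\widetilde\Delta^{r+1}=(\widetilde T^r)^{-1}\widetilde\Delta^r\widetilde T^r$. *)

(* Indices are 0-based: 'I_m = {0,...,m-1} stands for {1,...,m}. *)
From HB Require Import structures.
From mathcomp Require Import all_boot all_order all_algebra.
Set Implicit Arguments. Unset Strict Implicit. Unset Printing Implicit Defensive.
Import Order.TTheory GRing.Theory Num.Theory.
Local Open Scope ring_scope.

Section RCA.
Variables (F : fieldType) (m : nat).

(* Connection matrix: the partition J_0 ⊔ ... ⊔ J_b is given by a labelling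
   lab : 'I_m -> 'I_b.+1, with J_k = lab^{-1}(k). *)
Definition is_connection_matrix (b : nat) (lab : 'I_m -> 'I_b.+1) (D : 'M[F]_m) : Prop :=
  [/\ (forall i j : 'I_m, (j < i)%N -> D i j = 0),
      D *m D = 0 &
      (forall i j : 'I_m, D i j != 0 -> (i < j)%N /\ val (lab j) = (val (lab i)).+1)].

Definition subord (j : 'I_m) (r : nat) : 'I_m :=
  Ordinal (leq_ltn_trans (leq_subr r j) (ltn_ord j)).

(* columns marked as primary pivots at iteration r, given the current matrix D
   and the set S of columns already holding a primary pivot *)
Definition new_marks (r : nat) (D : 'M[F]_m) (S : {set 'I_m}) : {set 'I_m} :=
  [set j : 'I_m | [&& (r <= j)%N, D (subord j r) j != 0 & j \notin S]].

Definition Umx (p q : 'I_m) : 'M[F]_m := \matrix_(i, k) ((i == p) && (k == q))%:R.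

Definition Trs (r : nat) (D : 'M[F]_m) (js : 'I_m) : 'M[F]_m :=
  1%:M - \sum_(q : 'I_m | (js < q)%N)
            (D (subord js r) q / D (subord js r) js) *: Umx js q.

Definition Tr (r : nat) (D : 'M[F]_m) (N : {set 'I_m}) : 'M[F]_m :=
  foldr (fun A B => A *m B) 1%:M [seq Trs r D j | j <- [seq j <- enum 'I_m | j \in N]].

Definition rca_step (r : nat) (st : {set 'I_m} * 'M[F]_m) : {set 'I_m} * 'M[F]_m :=
  let: (S0, D) := st in
  let N := new_marks r D S0 in
  let T := Tr r D N in
  (S0 :|: N, invmx T *m D *m T).

(* rca_state D k = (marked columns, \widetilde\Delta^{k+1}) after iterations 1..k *)
Fixpoint rca_state (D : 'M[F]_m) (k : nat) : {set 'I_m} * 'M[F]_m :=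
  match k with
  | 0 => (set0, D)
  | k'.+1 => rca_step k (rca_state D k')
  end.

(* \widetilde\Delta^{m-1}: updates are performed for r = 1, ..., m-2 *)
Definition rca_last (D : 'M[F]_m) : 'M[F]_m := (rca_state D (m - 2)).2.

End RCA.

(* Before iteration r the current matrix D still satisfies D D = 0, and the marked
   columns carry an echelon structure: unmarked columns vanish on and below the diagonal
   r - 1, and each marked column j has a pivot in a row p j, with j - p j < r and p
   injective, such that column j vanishes below row p j and row p j vanishes to the
   right of column j. Under this invariant the row of every marked column is zero.
   The update replaces D by T^-1 D T with T unitriangular; comparing T (T^-1 D T) = D T
   by back substitution shows that the structure survives, while the factors T^{r,s}
   clear the rows of the new pivots to the right. After the markup of iteration m - 1
   every column is either marked, so its row is zero, or entirely zero. *)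

From HB Require Import structures.
From mathcomp Require Import all_boot all_order all_algebra zify.
Import Order.TTheory GRing.Theory Num.Theory.
Local Open Scope ring_scope.
Set Implicit Arguments. Unset Strict Implicit. Unset Printing Implicit Defensive.

Section Unitriangular.
Variables (R : pzRingType) (n : nat).
Implicit Types (A B U X Y : 'M[R]_n).

Definition unitriangular A :=
  (forall i k : 'I_n, (k < i)%N -> A i k = 0) /\ (forall i, A i i = 1).

Lemma unitriangular1 : unitriangular 1%:M.
Proof.
split=> [i k ki|i]; rewrite !mxE ?eqxx //.
by case: eqP => // ik; rewrite ik ltnn in ki.
Qed.

Lemma unitriangularM A B : unitriangular A -> unitriangular B -> unitriangular (A *m B).
Proof.
move=> [A0 A1] [B0 B1]; split=> [i k ki|i]; rewrite !mxE.
  apply: big1 => l _; case: (ltnP l i) => [li|il]; first by rewrite A0 ?mul0r.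
  by rewrite B0 ?mulr0 //; apply: leq_trans ki il.
rewrite (bigD1 i) //= A1 B1 mulr1 big1 ?addr0 // => l li.
case: (ltngtP l i) => [lt|gt|/val_inj eq]; first by rewrite A0 ?mul0r.
  by rewrite B0 ?mulr0.
by rewrite eq eqxx in li.
Qed.

Lemma unitriangular_mulmxE U X (i j : 'I_n) : unitriangular U ->
  (forall k : 'I_n, (i < k)%N -> X k j = 0) -> (U *m X) i j = X i j.
Proof.
move=> [U0 U1] Xk; rewrite mxE (bigD1 i) //= U1 mul1r big1 ?addr0 // => k ki.
case: (ltngtP k i) => [lt|gt|/val_inj eq]; first by rewrite U0 ?mul0r.
  by rewrite Xk ?mulr0.
by rewrite eq eqxx in ki.
Qed.

Lemma unitriangular_solve_col0 U X Y (j : 'I_n) (P : nat -> bool) :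
  unitriangular U -> U *m X = Y ->
  (forall a b, (a <= b)%N -> P a -> P b) ->
  (forall i : 'I_n, P i -> Y i j = 0) -> forall i : 'I_n, P i -> X i j = 0.
Proof.
move=> uU UX Pup Y0.
suff H d (i : 'I_n) : (n - i <= d)%N -> P i -> X i j = 0.
  by move=> i; apply: (H n); rewrite leq_subr.
elim: d i => [|d IH] i ni Pi; first by have := ltn_ord i; lia.
rewrite -(unitriangular_mulmxE uU) ?UX ?Y0 // => k ik.
by apply: IH; [have := ltn_ord k; lia | exact: Pup (ltnW ik) Pi].
Qed.

Lemma unitriangular_solve_pivot U X Y (j c : 'I_n) :
  unitriangular U -> U *m X = Y -> (forall i : 'I_n, (c < i)%N -> Y i j = 0) ->
  X c j = Y c j /\ forall i : 'I_n, (c < i)%N -> X i j = 0.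
Proof.
move=> uU UX Y0.
have X0 := unitriangular_solve_col0 uU UX (fun a b ab ca => leq_trans ca ab) Y0.
by split=> //; rewrite -UX unitriangular_mulmxE.
Qed.

End Unitriangular.

Lemma unitriangular_unit (R : comUnitRingType) n (A : 'M[R]_n) :
  unitriangular A -> A \in unitmx.
Proof.
move=> [A0 A1]; rewrite unitmxE -det_tr det_trig.
  by rewrite big1 ?unitr1 // => i _; rewrite mxE A1.
by apply/is_trig_mxP => i j ij; rewrite mxE A0.
Qed.

Section RowCancellation.
Variables (F : fieldType) (m : nat).
Implicit Types (D X : 'M[F]_m) (S : {set 'I_m}).

Lemma subordE (j : 'I_m) r : val (subord j r) = (j - r)%N.
Proof. by []. Qed.

Lemma TrsE r D (j a k : 'I_m) : Trs r D j a k =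
  (a == k)%:R - (if (a == j) && (j < k)%N then D (subord j r) k / D (subord j r) j else 0).
Proof.
rewrite /Trs !mxE summxE; congr (_ - _).
under eq_bigr => q _ do rewrite !mxE.
case: ifP => [/andP[/eqP-> jk]|H].
  rewrite (bigD1 k) //= !eqxx mulr1 big1 ?addr0 // => q /andP[_ /negbTE qk].
  by rewrite eq_sym qk andbF mulr0.
apply: big1 => q jq.
case: (boolP ((a == j) && (k == q))) => [/andP[/eqP aj /eqP kq]|]; last by rewrite mulr0.
by rewrite aj eqxx kq jq in H.
Qed.

Lemma unitriangular_Trs r D j : unitriangular (Trs r D j).
Proof.
split=> [i k ki|i]; rewrite TrsE.
  case: eqP => [ik|_]; first by rewrite ik ltnn in ki.
  by case: (i =P j) => [ij|] /=; rewrite ?subr0 // -ij ltnNge (ltnW ki) /= subr0.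
by rewrite eqxx; case: (i =P j) => [->|] /=; rewrite ?ltnn subr0.
Qed.

Lemma row_Trs r D (j i : 'I_m) : i != j -> row i (Trs r D j) = row i 1%:M.
Proof.
by move=> ij; apply/rowP => k; rewrite [row _ _ _ _]mxE TrsE mxE (negbTE ij) subr0 !mxE.
Qed.

Lemma mulmx_TrsE X r D (j i k : 'I_m) : (X *m Trs r D j) i k =
  X i k - (if (j < k)%N then D (subord j r) k / D (subord j r) j * X i j else 0).
Proof.
rewrite mxE.
under eq_bigr => l _ do rewrite TrsE mulrBr.
rewrite sumrB; congr (_ - _).
  rewrite (bigD1 k) //= eqxx mulr1 big1 ?addr0 // => l lk.
  by rewrite (negbTE lk) mulr0.
rewrite (bigD1 j) //= eqxx /= big1 ?addr0 => [|l lj]; last by rewrite (negbTE lj) mulr0.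
by case: ifP; rewrite ?mulr0 // mulrC.
Qed.

Definition Tprod r D (s : seq 'I_m) : 'M[F]_m :=
  foldr (fun A B => A *m B) 1%:M [seq Trs r D j | j <- s].

Lemma unitriangular_Tprod r D s : unitriangular (Tprod r D s).
Proof.
elim: s => [|j s IH] /=; first exact: unitriangular1.
exact: unitriangularM (unitriangular_Trs _ _ _) IH.
Qed.

Lemma row_Tprod r D s (i : 'I_m) : i \notin s -> row i (Tprod r D s) = row i 1%:M.
Proof.
elim: s => [//|j s IH] /=; rewrite inE negb_or => /andP[ij /IH {}IH].
by rewrite row_mul row_Trs // -row_mul mul1mx.
Qed.

(* Processing the marked columns from left to right: each factor [Trs r D j] clears
   row [j - r] to the right of the pivot, and the later factors only subtract
   multiples of columns [j' > j], which are already zero in that row. *)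
Lemma mulmx_Tprod_pivot_row0 r D (s : seq 'I_m) :
  sorted (fun a b : 'I_m => (a < b)%N) s ->
  (forall j, j \in s -> D (subord j r) j != 0) ->
  (forall j j', j \in s -> j' \in s -> (j' < j)%N -> D (subord j r) j' = 0) ->
  forall j, j \in s -> forall q : 'I_m, (j < q)%N -> (D *m Tprod r D s) (subord j r) q = 0.
Proof.
elim: s => [//|j1 s IH] /= srt nz lo.
have srt' : sorted (fun a b : 'I_m => (a < b)%N) s by exact: path_sorted srt.
have /allP gt_j1 : all (fun b : 'I_m => (j1 < b)%N) s.
  by apply: (order_path_min _ srt) => a b c; apply: ltn_trans.
move=> j; rewrite inE => /orP[/eqP->|js] q j1q; rewrite mulmxA.
  rewrite mxE big1 // => k _.
  case: (ltnP j1 k) => [j1k|kj1].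
    by rewrite mulmx_TrsE j1k mulfVK ?subrr ?mul0r // nz ?mem_head.
  have ks : k \notin s by apply/negP => /gt_j1; rewrite ltnNge kj1.
  have /rowP/(_ q) := row_Tprod r D ks; rewrite !mxE => ->.
  case: eqP => [kq|]; last by rewrite mulr0.
  by rewrite -kq ltnNge kj1 in j1q.
rewrite -(IH srt' _ _ j js q j1q); first last.
- by move=> a b aS bS; apply: lo; rewrite inE ?aS ?bS orbT.
- by move=> a aS; apply: nz; rewrite inE aS orbT.
rewrite !mxE; apply: eq_bigr => k _; congr (_ * _).
rewrite mulmx_TrsE; case: ifP => _; last by rewrite subr0.
by rewrite (lo j j1) ?mulr0 ?subr0 ?mem_head // ?inE ?js ?orbT // gt_j1.
Qed.

(* Before iteration [r]: [S] is the set of marked columns and [p j] the row of the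
   primary pivot of [j \in S]. *)
Record pivots r S D (p : 'I_m -> 'I_m) : Prop := Pivots {
  unmarked_col0 : forall l, l \notin S -> forall i : 'I_m, (l < i + r)%N -> D i l = 0;
  pivot_neq0 : forall j, j \in S -> D (p j) j != 0;
  below_pivot0 : forall j, j \in S -> forall i : 'I_m, (p j < i)%N -> D i j = 0;
  pivot_near_diag : forall j, j \in S -> (j < p j + r)%N;
  pivot_inj : {in S &, injective p} }.

Definition pivot_rows_cleared S D (p : 'I_m -> 'I_m) :=
  forall j, j \in S -> forall q : 'I_m, (j < q)%N -> D (p j) q = 0.

Definition rca_invariant r S D :=
  D *m D = 0 /\ exists p, pivots r S D p /\ pivot_rows_cleared S D p.

(* Take [l \in S] with [D l k != 0] whose pivot row [p l] is lowest: then
   [(D *m D) (p l) k = D (p l) l * D l k != 0]. *)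
Lemma marked_row0 r S D p : D *m D = 0 -> pivots r S D p -> pivot_rows_cleared S D p ->
  forall j, j \in S -> forall k, D j k = 0.
Proof.
move=> DD0 piv clr j jS k; apply/eqP; apply: contraT => Djk.
pose P := [pred l : 'I_m | (l \in S) && (D l k != 0)].
have Pj : P j by rewrite inE /= jS Djk.
case: (@arg_maxnP _ j P (fun l => val (p l)) Pj) => l0 /andP[l0S l0k] maxl.
have : (D *m D) (p l0) k = 0 by rewrite DD0 mxE.
rewrite mxE (bigD1 l0) //= big1 ?addr0 => [/eqP|l ll0].
  by rewrite mulf_eq0 (negbTE (pivot_neq0 piv l0S)) (negbTE l0k).
case: (D l k =P 0) => [->|/eqP Dlk]; first by rewrite mulr0.
rewrite [D _ l](_ : _ = 0) ?mul0r //.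
case: (boolP (l \in S)) => lS.
  have le : (p l <= p l0)%N by apply: (maxl l); rewrite inE /= lS Dlk.
  apply: (below_pivot0 piv lS); rewrite ltn_neqAle le andbT.
  by apply: contra ll0 => /eqP pe; apply/eqP/(pivot_inj piv) => //; apply: val_inj.
case: (ltngtP l l0) => [lt|gt|/val_inj eq]; last by rewrite eq eqxx in ll0.
- exact/(unmarked_col0 piv lS)/(ltn_trans lt)/(pivot_near_diag piv l0S).
- exact: clr.
Qed.

Lemma new_marksP r D S (j : 'I_m) :
  reflect [/\ (r <= j)%N, D (subord j r) j != 0 & j \notin S] (j \in new_marks r D S).
Proof. by rewrite inE; apply: and3P. Qed.

Definition extend_pivots r D S (p : 'I_m -> 'I_m) (j : 'I_m) : 'I_m :=
  if j \in new_marks r D S then subord j r else p j.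

Section Markup.
Variables (r : nat) (S : {set 'I_m}) (D : 'M[F]_m) (p : 'I_m -> 'I_m).
Hypotheses (piv : pivots r S D p) (clr : pivot_rows_cleared S D p).
Let N := new_marks r D S.
Let p' := extend_pivots r D S p.

Lemma extend_pivots_old j : j \in S -> p' j = p j.
Proof. by move=> jS; rewrite /p' /extend_pivots inE jS !andbF. Qed.

Lemma extend_pivots_new j : j \in N -> p' j = subord j r.
Proof. by move=> jN; rewrite /p' /extend_pivots jN. Qed.

Lemma markup_cleared : pivot_rows_cleared S D p'.
Proof. by move=> j jS; rewrite extend_pivots_old //; exact: clr. Qed.

Lemma markup_pivots : pivots r.+1 (S :|: N) D p'.
Proof.
split.
- move=> l; rewrite in_setU negb_or => /andP[lS lN] i lir.
  case: (ltnP l (i + r)) => [lt|ge]; first exact: (unmarked_col0 piv).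
  have eq : l = (i + r)%N :> nat by lia.
  have si : subord l r = i by apply: val_inj; rewrite subordE eq addnK.
  apply/eqP; apply: contraNT lN => Dil; apply/new_marksP.
  by rewrite eq leq_addl si.
- move=> j; rewrite in_setU => /orP[jS|/[dup] jN /new_marksP[_ Dj _]].
    by rewrite extend_pivots_old // (pivot_neq0 piv).
  by rewrite extend_pivots_new.
- move=> j; rewrite in_setU => /orP[jS|/[dup] jN /new_marksP[rj _ jS]] i.
    by rewrite extend_pivots_old //; exact: (below_pivot0 piv).
  by rewrite extend_pivots_new // subordE => lt; apply: (unmarked_col0 piv) => //; lia.
- move=> j; rewrite in_setU => /orP[jS|/[dup] jN /new_marksP[rj _ _]].
    by rewrite extend_pivots_old //; have := pivot_near_diag piv jS; lia.
  by rewrite extend_pivots_new // subordE; lia.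
have old_new j j' : j \in S -> j' \in N -> p' j <> p' j'.
  move=> jS /[dup] j'N /new_marksP[rj Dj j'S].
  rewrite extend_pivots_old // extend_pivots_new // => e.
  case: (ltngtP j j') => [lt|gt|/val_inj eq]; last by rewrite -eq jS in j'S.
  + by move: Dj; rewrite -e clr ?eqxx.
  + by have := pivot_near_diag piv jS; rewrite e subordE; lia.
move=> j j'; rewrite !in_setU => /orP[jS|jN] /orP[j'S|j'N] e.
- by apply: (pivot_inj piv); rewrite -?extend_pivots_old.
- by case: (old_new _ _ jS j'N).
- by case: (old_new _ _ j'S jN).
move: (jN) (j'N) e => /new_marksP[rj _ _] /new_marksP[rj' _ _].
rewrite !extend_pivots_new // => /(congr1 val); rewrite !subordE => e.
by apply: val_inj => /=; lia.
Qed.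

End Markup.

Section Update.
Variables (r : nat) (S : {set 'I_m}) (D : 'M[F]_m) (p : 'I_m -> 'I_m).
Hypotheses (DD0 : D *m D = 0) (piv : pivots r S D p) (clr : pivot_rows_cleared S D p).
Let N := new_marks r D S.
Let p' := extend_pivots r D S p.
Let T := Tr r D N.
Let D' := invmx T *m D *m T.
Let piv' : pivots r.+1 (S :|: N) D p' := markup_pivots piv clr.

Lemma unitriangular_Tr : unitriangular T.
Proof. exact: unitriangular_Tprod. Qed.

Lemma row_Tr_notin i : i \notin N -> row i T = row i 1%:M.
Proof. by move=> iN; apply: row_Tprod; rewrite mem_filter negb_and iN. Qed.

Lemma conj_Tr_sqr0 : D' *m D' = 0.
Proof.
have uT := unitriangular_unit unitriangular_Tr.
by rewrite !mulmxA -(mulmxA _ T) mulmxV // mulmx1 -(mulmxA _ D D) DD0 mulmx0 mul0mx.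
Qed.

Lemma conj_Tr_row_notin i k : i \notin N -> D' i k = (D *m T) i k.
Proof.
move=> iN; have uT := unitriangular_unit unitriangular_Tr.
have rowTV : row i (invmx T) = row i 1%:M.
  have := congr1 (mulmx^~ (invmx T)) (row_Tr_notin iN).
  by rewrite /= -!row_mul mulmxV // mul1mx => ->.
have /rowP/(_ k) : row i D' = row i (D *m T).
  by rewrite /D' -mulmxA row_mul rowTV -row_mul mul1mx.
by rewrite !mxE.
Qed.

Lemma mulmx_TrE (i k : 'I_m) : (forall l, l \in N -> (l < k)%N -> D i l = 0) ->
  (D *m T) i k = D i k.
Proof.
move=> D0; have [T0 T1] := unitriangular_Tr.
rewrite mxE (bigD1 k) //= T1 mulr1 big1 ?addr0 // => l lk.
case: (boolP (l \in N)) => lN.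
  case: (ltngtP l k) => [lt|gt|/val_inj eq]; last by rewrite eq eqxx in lk.
    by rewrite D0 ?mul0r.
  by rewrite T0 ?mulr0.
have /rowP/(_ k) := row_Tr_notin lN; rewrite !mxE (negbTE lk) => ->.
by rewrite mulr0.
Qed.

Lemma new_mark_col0 (k i : 'I_m) : k \in N -> (k < i + r)%N -> D i k = 0.
Proof.
move=> /[dup] kN /new_marksP[rk _ _] ki.
apply: (below_pivot0 piv'); first by rewrite in_setU kN orbT.
by rewrite /p' extend_pivots_new // subordE; lia.
Qed.

(* Otherwise [(D *m D) (p' j - r) j = D (p' j - r) (p' j) * D (p' j) j != 0]. *)
Lemma pivot_notin_new j : j \in S :|: N -> p' j \notin N.
Proof.
move=> jSN; apply/negP => /[dup] nN /new_marksP[rn Dn _].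
have : (D *m D) (subord (p' j) r) j = 0 by rewrite DD0 mxE.
rewrite mxE (bigD1 (p' j)) //= big1 ?addr0 => [/eqP|l ln].
  by rewrite mulf_eq0 (negbTE Dn) (negbTE (pivot_neq0 piv' jSN)).
case: (D l j =P 0) => [->|/eqP Dlj]; first by rewrite mulr0.
have lS : l \notin S by apply: contra Dlj => lS; rewrite (marked_row0 DD0 piv clr lS).
have lj : (l < p' j)%N.
  rewrite ltn_neqAle (contra_neq (@val_inj _ _ _ l (p' j)) ln) /= leqNgt.
  by apply: contra Dlj => /(below_pivot0 piv' jSN) ->.
by rewrite (unmarked_col0 piv) ?mul0r // subordE; lia.
Qed.

Lemma conj_Tr_pivots : pivots r.+1 (S :|: N) D' p'.
Proof.
have uT := unitriangular_Tr.
have TD' : T *m D' = D *m T.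
  by rewrite /D' !mulmxA mulmxV ?unitriangular_unit // mul1mx.
have pivot_col j : j \in S :|: N ->
    D' (p' j) j = D (p' j) j /\ forall i : 'I_m, (p' j < i)%N -> D' i j = 0.
  move=> jSN; have Mj (i : 'I_m) : (p' j <= i)%N -> (D *m T) i j = D i j.
    move=> ji; apply: mulmx_TrE => k kN kj; apply: new_mark_col0 => //.
    by have := pivot_near_diag piv' jSN; lia.
  have [-> below] := unitriangular_solve_pivot uT TD'
    (fun i ji => etrans (Mj i (ltnW ji)) (below_pivot0 piv' jSN ji)).
  by rewrite Mj.
split.
- move=> l lSN i li.
  apply: (unitriangular_solve_col0 uT TD' (P := fun i => (l < i + r.+1)%N)) li.
    by move=> a b; lia.
  move=> i' li'; rewrite mulmx_TrE => [|k kN kl]; first exact: (unmarked_col0 piv').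
  by apply: new_mark_col0 => //; lia.
- by move=> j /[dup] jSN /pivot_col[-> _]; exact: (pivot_neq0 piv' jSN).
- by move=> j /pivot_col[].
- exact: (pivot_near_diag piv').
- exact: (pivot_inj piv').
Qed.

Lemma conj_Tr_cleared : pivot_rows_cleared (S :|: N) D' p'.
Proof.
move=> j jSN q jq; rewrite conj_Tr_row_notin ?pivot_notin_new //.
case/setUP: (jSN) => [jS|jN].
  rewrite mulmx_TrE; first exact: (markup_cleared r clr jS jq).
  move=> k kN kq; case: (ltngtP j k) => [lt|gt|/val_inj eq].
  - exact: (markup_cleared r clr jS lt).
  - apply: new_mark_col0 => //.
    by have := pivot_near_diag piv' jSN; lia.
  - by move: kN => /new_marksP[_ _]; rewrite -eq jS.
have memN k : (k \in [seq k <- enum 'I_m | k \in N]) = (k \in N).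
  by rewrite mem_filter mem_enum andbT.
have sortedN : sorted (fun a b : 'I_m => (a < b)%N) [seq k <- enum 'I_m | k \in N].
  apply: sorted_filter; first by move=> a b c; apply: ltn_trans.
  by have := iota_ltn_sorted 0 m; rewrite -val_enum_ord sorted_map.
rewrite /p' extend_pivots_new //; apply: mulmx_Tprod_pivot_row0; rewrite ?memN //.
- by move=> a; rewrite memN => /new_marksP[].
- move=> a b; rewrite !memN => /new_marksP[ra _ _] bN ba.
  by apply: new_mark_col0; rewrite ?subordE //; lia.
Qed.

End Update.

Lemma rca_step_invariant r S D : rca_invariant r S D ->
  rca_invariant r.+1 (rca_step r (S, D)).1 (rca_step r (S, D)).2.
Proof.
move=> [DD0 [p [piv clr]]] /=; split; first exact: conj_Tr_sqr0.
by exists (extend_pivots r D S p); split; [exact: conj_Tr_pivots | exact: conj_Tr_cleared].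
Qed.

Lemma connection_matrix_invariant b (lab : 'I_m -> 'I_b.+1) D :
  is_connection_matrix lab D -> rca_invariant 1 set0 D.
Proof.
move=> [_ DD0 supp]; split=> //; exists id; split; last by move=> ?; rewrite in_set0.
split; try by move=> ?; rewrite in_set0.
move=> l _ i li; apply/eqP; apply: contraT => /supp[il _].
by move: li; rewrite addn1 ltnS leqNgt il.
Qed.

Lemma rca_state_invariant b (lab : 'I_m -> 'I_b.+1) D : is_connection_matrix lab D ->
  forall k, rca_invariant k.+1 (rca_state D k).1 (rca_state D k).2.
Proof.
move=> cD; elim=> [|k IH]; first exact: connection_matrix_invariant cD.
by rewrite [rca_state D k.+1]/=; case: (rca_state D k) IH => S0 D0 /rca_step_invariant.
Qed.

(* For [m <= r.+1] the markup of iteration [r] leaves every unmarked column zero, and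
   new pivots can only sit in the last column, so there is nothing left to clear. *)
Lemma rca_invariant_final r S D : rca_invariant r S D -> (m <= r.+1)%N ->
  forall j : 'I_m, col j D = 0 \/ row j D = 0.
Proof.
move=> [DD0 [p [piv clr]]] rm j.
have piv' := markup_pivots piv clr.
have clr' : pivot_rows_cleared (S :|: new_marks r D S) D (extend_pivots r D S p).
  move=> l; rewrite in_setU => /orP[lS|/new_marksP[rl _ _]] q lq.
    exact: (markup_cleared r clr lS lq).
  by have := ltn_ord q; lia.
case: (boolP (j \in S :|: new_marks r D S)) => jSN.
  by right; apply/rowP => k; rewrite !mxE (marked_row0 DD0 piv' clr' jSN).
by left; apply/colP => i; rewrite !mxE (unmarked_col0 piv') //; have := ltn_ord j; lia.
Qed.

End RowCancellation.

Theorem mainTheorem12 (F : fieldType) (m : nat) (hm : (1 <= m)%N)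
  (b : nat) (lab : 'I_m -> 'I_b.+1) (Delta : 'M[F]_m) :
  is_connection_matrix lab Delta ->
  forall j : 'I_m, col j (rca_last Delta) *m row j (rca_last Delta) = 0.
Proof.
move=> cD j.
have := rca_state_invariant cD (m - 2); rewrite -/(rca_last Delta) => inv.
have last_iter : (m <= (m - 2).+2)%N by lia.
by have [->|->] := rca_invariant_final inv last_iter j; rewrite ?mul0mx ?mulmx0.
Qed.
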